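(* Assume $f$ has a unique global maximizer $g$. For every assignment $A$ and every $v\notin\mathcal C(A)$, if $1-g[v]\in\Psi_A[v]$ then there exists $S\subseteq\mathcal C(A)$ with $S\Rightarrow v$. If furthermore the problem contains no weak epistasis, then there exists $s\in\mathcal C(A)$ with $\{s\}\Rightarrow v$.
   Context: Fix $\ell\ge 1$, loci $V=\{0,\dots,\ell-1\}$, chromosomes $\vec y\in\{0,1\}^V$, and a fitness function $f:\{0,1\}^V\to\mathbb R$ to be maximized; $g$ denotes its unique global maximizer and $g[v]$ its allele at $v$. An assignment $A$ is a set of pairs $(v,a)$ ($v\in V$, $a\in\{0,1\}$) with at most one pair per locus; $A[v]=a$ if $(v,a)\in A$, else $A[v]=*$; coverage $\mathcal C(A)=\{v:A[v]\ne *\}$. $\Psi_A$ (constrained optima) is the set of chromosomes agreeing with $A$ on $\mathcal C(A)$ and of maximum fitness among all such chromosomes; $\Psi_A[v]=\{\psi_v:\psi\in\Psi_A\}$. Epistasis: for $v\in V$ and nonempty $S\subseteq V\setminus\{v\}$, $S\Rightarrow v$ iff for every $s\in S$ there exists an assignment $A$ with $\mathcal C(A)=S$ such that $\Psi_A[v]\neq\Psi_{A\setminus\{(s,A[s])\}}[v]$; the empty set is never epistatic. An epistasis $S\Rightarrow v$ with $|S|\ge2$ is weak if no nonempty proper subset $T\subsetneq S$ satisfies $T\Rightarrow v$; the problem contains no weak epistasis if no epistasis is weak. *)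

From mathcomp Require Import all_boot all_order all_algebra.
From mathcomp Require Import reals.
Set Implicit Arguments. Unset Strict Implicit. Unset Printing Implicit Defensive.
Import Order.TTheory GRing.Theory Num.Theory.
Local Open Scope ring_scope.

Definition chrom (l : nat) := {ffun 'I_l -> bool}.

(* An assignment: at most one allele per locus; None = "*" (unassigned). *)
Definition assignment (l : nat) := {ffun 'I_l -> option bool}.

Definition coverage l (A : assignment l) : {set 'I_l} :=
  [set v | A v != None].

Definition unassign l (A : assignment l) (s : 'I_l) : assignment l :=
  [ffun v => if v == s then None else A v].

Definition agrees l (A : assignment l) (y : chrom l) : bool :=
  [forall v, if A v is Some a then y v == a else true].

Definition Psi (R : realType) l (f : chrom l -> R) (A : assignment l)
  : {set chrom l} :=
  [set y | agrees A y && [forall z, agrees A z ==> (f z <= f y)]].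

Definition Psi_at (R : realType) l (f : chrom l -> R) (A : assignment l)
  (v : 'I_l) : {set bool} :=
  [set (y : chrom l) v | y in Psi f A].

Definition epistatic (R : realType) l (f : chrom l -> R) (S : {set 'I_l})
  (v : 'I_l) : Prop :=
  S != set0 /\ v \notin S /\
  forall s, s \in S ->
    exists A : assignment l,
      coverage A = S /\ Psi_at f A v != Psi_at f (unassign A s) v.

Definition weak_epistasis (R : realType) l (f : chrom l -> R) (S : {set 'I_l})
  (v : 'I_l) : Prop :=
  epistatic f S v /\ (2 <= #|S|)%N /\
  ~ (exists T : {set 'I_l}, T != set0 /\ T \proper S /\ epistatic f T v).

Definition no_weak_epistasis (R : realType) l (f : chrom l -> R) : Prop :=
  forall S v, ~ weak_epistasis f S v.

Definition unique_global_max (R : realType) l (f : chrom l -> R) (g : chrom l)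
  : Prop :=
  forall y, y != g -> f y < f g.

From mathcomp Require Import all_boot all_order all_algebra.
From mathcomp Require Import reals.
From Stdlib Require Import Classical.
Set Implicit Arguments. Unset Strict Implicit. Unset Printing Implicit Defensive.
Import Order.TTheory GRing.Theory Num.Theory.
Local Open Scope ring_scope.

(* Restrict A to a set T of loci and choose T minimal such that the allele
   1 - g[v] stays constrained-optimal at v.  T cannot be empty, since without
   constraints the only optimum is g; and removing any s from T loses the
   allele, which is exactly the witness that T => v.  Without weak epistasis,
   any epistatic set then shrinks to an epistatic singleton. *)

Definition restrict l (A : assignment l) (T : {set 'I_l}) : assignment l :=
  [ffun u => if u \in T then A u else None].

Lemma coverage_restrict l (A : assignment l) (T : {set 'I_l}) :
  T \subset coverage A -> coverage (restrict A T) = T.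
Proof.
move=> sTA; apply/setP => u; rewrite !inE ffunE; case: ifP => // uT.
by have := subsetP sTA u uT; rewrite inE.
Qed.

Lemma restrict_coverage l (A : assignment l) : restrict A (coverage A) = A.
Proof.
by apply/ffunP => u; rewrite ffunE inE; case: ifP => // /negbFE /eqP ->.
Qed.

Lemma unassign_restrict l (A : assignment l) (T : {set 'I_l}) s :
  unassign (restrict A T) s = restrict A (T :\ s).
Proof. by apply/ffunP => u; rewrite !ffunE !inE; case: (u == s). Qed.

Lemma agrees_coverage0 l (A : assignment l) y :
  coverage A = set0 -> agrees A y.
Proof.
move=> /setP cA0; apply/forallP => u.
by have := cA0 u; rewrite !inE; case: (A u).
Qed.

Lemma Psi_coverage0 (R : realType) l (f : chrom l -> R) g (A : assignment l) :
  unique_global_max f g -> coverage A = set0 -> Psi f A = [set g].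
Proof.
move=> gmax cA0; apply/setP => y; rewrite !inE !agrees_coverage0 //=.
apply/forallP/eqP => [ymax | -> z]; last first.
  by apply/implyP => _; case: (eqVneq z g) => [-> // | /gmax/ltW].
have := ymax g; rewrite agrees_coverage0 //=.
by case: (eqVneq y g) => // /gmax; rewrite ltNge => /negbTE ->.
Qed.

Section MinimalRestriction.

Variables (R : realType) (l : nat) (f : chrom l -> R).
Variables (A : assignment l) (v : 'I_l) (b : bool).

Definition keeps_allele (T : {set 'I_l}) := b \in Psi_at f (restrict A T) v.

Lemma minimal_restriction_epistatic (S : {set 'I_l}) :
  v \notin coverage A -> ~~ keeps_allele set0 ->
  minset keeps_allele S -> S \subset coverage A -> epistatic f S v.
Proof.
move=> vA not_kept0 /minsetP[keptS minS] sSA; split; [|split].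
- by apply: contraNneq not_kept0 => S0; rewrite -S0.
- by apply: contra vA; apply: (subsetP sSA).
move=> s sS; exists (restrict A S); split; first exact: coverage_restrict.
rewrite unassign_restrict; apply/eqP => eqPsi.
have : S :\ s = S by apply: minS; [rewrite /keeps_allele -eqPsi | apply: subsetDl].
by move/setP/(_ s); rewrite setD11 sS.
Qed.

End MinimalRestriction.

Lemma epistatic_singleton_sub (R : realType) l (f : chrom l -> R) S v :
  no_weak_epistasis f -> epistatic f S v ->
  exists2 s, s \in S & epistatic f [set s] v.
Proof.
move=> nwe; elim: {S}_.+1 {-2}S (ltnSn #|S|) => // n IH S ltSn epiS.
have [S_le1 | S_gt1] := leqP #|S| 1.
  have [s defS] : exists s, S = [set s].
    by apply/cards1P; rewrite eqn_leq S_le1 card_gt0; case: epiS.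
  by exists s; [rewrite defS set11 | rewrite -defS].
have [T [_ [ltTS epiT]]] :
    exists T : {set 'I_l}, T != set0 /\ T \proper S /\ epistatic f T v.
  by apply: NNPP => noT; apply: (nwe S v).
have [|s sT epi_s] := IH T _ epiT.
  by apply: leq_trans (proper_card ltTS) _; rewrite -ltnS.
by exists s => //; apply: (subsetP (proper_sub ltTS)).
Qed.

Theorem proposition7 (R : realType) (l : nat) (hl : (1 <= l)%N)
  (f : chrom l -> R) (g : chrom l) (hg : unique_global_max f g) :
  forall (A : assignment l) (v : 'I_l),
    v \notin coverage A ->
    ~~ g v \in Psi_at f A v ->
    (exists S : {set 'I_l}, S \subset coverage A /\ epistatic f S v) /\
    (no_weak_epistasis f ->
       exists s, s \in coverage A /\ epistatic f [set s] v).
Proof.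
move=> A v vA flipped.
have not_kept0 : ~~ keeps_allele f A v (~~ g v) set0.
  rewrite /keeps_allele /Psi_at (Psi_coverage0 hg) ?coverage_restrict ?sub0set //.
  by rewrite imset_set1 inE; case: (g v).
have keptA : keeps_allele f A v (~~ g v) (coverage A).
  by rewrite /keeps_allele restrict_coverage.
have [S minS sSA] := minset_exists keptA.
have epiS := minimal_restriction_epistatic vA not_kept0 minS sSA.
split; first by exists S.
move=> nwe; have [s sS epi_s] := epistatic_singleton_sub nwe epiS.
by exists s; split; first exact: (subsetP sSA).
Qed.
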